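(* Let $V$ be an $n$-dimensional complex vector space, $\Lambda(V\otimes V^* )$ the exterior algebra on $V\otimes V^*$, and $X=(x_{ij})_{1\le i,j\le n}\in\operatorname{Mat}_{n,n}(\Lambda(V\otimes V^* ))$. Then $X^{2n}=0$.
   Context: $e_1,\ldots,e_n$ is a basis of $V$, $e_i^*$ its dual basis, $x_{ij}=e_i\otimes e_j^*$ is the standard basis of $V\otimes V^*$. Products in the exterior algebra are wedge products; matrix products are taken with entries multiplied in the order written. *)

From mathcomp Require Import all_boot all_order all_algebra.
From mathcomp Require Import complex Rstruct.
Set Implicit Arguments. Unset Strict Implicit. Unset Printing Implicit Defensive.
Import Order.TTheory GRing.Theory Num.Theory.
Local Open Scope ring_scope.

Definition CC : fieldType := Rdefinitions.R[i].

(* Index set of the standard basis x_ij = e_i (x) e_j^* of V (x) V^* ,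
   dim V = n. *)
Definition idx (n : nat) : finType := ('I_n * 'I_n)%type.

(* Exterior algebra Lambda(W) of the free C-module W with basis indexed by
   the finite (totally ordered, via enum_rank) set idx n.  An element is
   its coordinate vector in the standard basis
   { e_S = e_{s_1} /\ ... /\ e_{s_k} : S subset, s_1 < ... < s_k }. *)
Definition ext (n : nat) : Type := {ffun {set idx n} -> CC}.

(* sign of e_S /\ e_T = (-1)^{#{(s,t) in S x T : s > t}} e_{S u T}
   (when S and T are disjoint; otherwise the product is 0). *)
Definition ext_sign n (S T : {set idx n}) : CC :=
  (-1) ^+ #|[set p : idx n * idx n |
               (p.1 \in S) && (p.2 \in T) &&
               (enum_rank p.2 < enum_rank p.1)%N]|.

Definition ext_mul n (a b : ext n) : ext n :=
  [ffun U : {set idx n} =>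
     \sum_(S : {set idx n})
       \sum_(T : {set idx n} | (S :&: T == set0) && (S :|: T == U))
         ext_sign S T * a S * b T].

Definition ext_one n : ext n := [ffun S : {set idx n} => (S == set0)%:R].

Definition ext_gen n (i j : 'I_n) : ext n :=
  [ffun S : {set idx n} => (S == [set (i, j)])%:R].

(* Matrices over Lambda(V (x) V^* ): product with entries multiplied
   in the order written. *)
Definition ext_mxmul n m (A B : 'M[ext n]_m) : 'M[ext n]_m :=
  \matrix_(i < m, j < m) \sum_(k < m) ext_mul (A i k) (B k j).

Definition ext_mx1 n m : 'M[ext n]_m :=
  \matrix_(i < m, j < m) (if i == j then ext_one n else 0).

Definition ext_mxpow n m (A : 'M[ext n]_m) (k : nat) : 'M[ext n]_m :=
  iter k (ext_mxmul A) (ext_mx1 n m).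

Definition Xgen n : 'M[ext n]_n := \matrix_(i < n, j < n) ext_gen i j.

(* Every entry x_ij of X is odd in the exterior algebra, and odd elements
   anticommute, so for matrices A, B with odd entries tr (A B) = - tr (B A);
   in particular tr X^(2k) = 0 for k > 0.  The entries of Y = X^2 lie in the
   even part of the exterior algebra, which is commutative and has no
   additive torsion.  Over such a ring an n x n matrix whose power traces all
   vanish is nilpotent of index n: writing p for its characteristic
   polynomial, p' = tr adj (x - A) = sum_i (p div x^(i+1)) tr A^i reduces to
   p' = n (p div x), which forces p = x^n + p_0, and then Cayley-Hamilton
   and a trace give p_0 = 0.  Hence X^(2n) = Y^n = 0. *)
From HB Require Import structures.
From mathcomp Require Import all_boot all_order all_algebra zify ring.
From mathcomp Require Import complex Rstruct.
Set Implicit Arguments. Unset Strict Implicit. Unset Printing Implicit Defensive.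
Import Order.TTheory GRing.Theory Num.Theory.
Local Open Scope ring_scope.
Section CharPolyTrace.
Variable R : comNzRingType.

Lemma deriv_big_prod (I : eqType) (r : seq I) (F : I -> {poly R}) : uniq r ->
  (\prod_(i <- r) F i)^`() =
  \sum_(j <- r) \prod_(i <- r) (if i == j then (F i)^`() else F i).
Proof.
elim: r => [|a r IH] /=; first by rewrite !big_nil -polyC1 derivC.
case/andP=> anr ur; rewrite big_cons derivM IH //.
rewrite [in RHS]big_cons [in RHS]big_cons eqxx mulr_sumr; congr (_ * _ + _).
  by apply: eq_big_seq => i ir; case: eqP ir anr => // -> ->.
apply: eq_big_seq => j jr; rewrite big_cons.
by case: eqP jr anr => [-> -> //|_ _ _].
Qed.

Lemma deriv_det n (M : 'M[{poly R}]_n) :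
  (\det M)^`() =
  \sum_j \det (\matrix_(i, k) if i == j then (M i k)^`() else M i k).
Proof.
rewrite /determinant raddf_sum exchange_big /=; apply: eq_bigr => s _.
have sign_const : (((-1) ^+ perm.odd_perm s : {poly R}))^`() = 0.
  by rewrite -polyCN -rmorphXn derivC.
rewrite derivM sign_const mul0r add0r deriv_big_prod ?index_enum_uniq //.
rewrite mulr_sumr; apply: eq_bigr => j _; congr (_ * _).
by apply: eq_bigr => i _; rewrite mxE.
Qed.

Lemma drop_polyS_mulX (q : {poly R}) i :
  drop_poly i.+1 q * 'X = drop_poly i q - (q`_i)%:P.
Proof.
apply/polyP => j; rewrite coefMX coefB coefC !coef_drop_poly.
by case: j => [|j] /=; rewrite ?subrr // subr0 addSnnS.
Qed.

Lemma horner_mx_coef n (A : 'M[R]_n.+1) (q : {poly R}) :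
  horner_mx A q = \sum_(i < size q) q`_i *: A ^+ i.
Proof.
rewrite -{1}(coefK q) poly_def raddf_sum /=; apply: eq_bigr => i _.
by rewrite horner_mxZ /= rmorphXn /= horner_mx_X.
Qed.

Variables (m : nat) (A : 'M[R]_m.+1).
Local Notation n := m.+1.
Local Notation p := (char_poly A).
Local Notation C := (map_mx (@polyC R)).

Lemma coef_char_poly_size : p`_n = 1.
Proof. by have /monicP := char_poly_monic A; rewrite lead_coefE size_char_poly. Qed.

Lemma drop_char_poly_size : drop_poly n p = 1.
Proof.
apply/polyP => j; rewrite coef_drop_poly coef1.
case: j => [|j]; first by rewrite add0n coef_char_poly_size.
by rewrite nth_default // size_char_poly; lia.
Qed.

Lemma adj_char_poly_mx :
  \adj (char_poly_mx A) = \sum_(i < n) drop_poly i.+1 p *: C (A ^+ i).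
Proof.
set Q := \sum_(i < n) _.
pose F i := drop_poly i p *: C (A ^+ i).
have step i : char_poly_mx A *m (drop_poly i.+1 p *: C (A ^+ i)) =
    (F i - F i.+1) - (p`_i)%:P *: C (A ^+ i).
  rewrite -scalemxAr /char_poly_mx mulmxBl mul_scalar_mx -map_mxM mulmxE -exprS.
  by rewrite scalerBr scalerA drop_polyS_mulX scalerBl addrAC.
have telescope : \sum_(i < n) (F i - F i.+1) = F 0%N - F n.
  rewrite -(big_mkord xpredT (fun i => F i - F i.+1)).
  by rewrite (eq_bigr (fun i => - (F i.+1 - F i))) => [|i _]; rewrite ?sumrN
    ?telescope_sumr ?opprB.
have CA : \sum_(i < n) (p`_i)%:P *: C (A ^+ i) = C (horner_mx A p - A ^+ n).
  rewrite horner_mx_coef size_char_poly [in RHS]big_ord_recr /=.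
  rewrite coef_char_poly_size scale1r addrK.
  rewrite raddf_sum; apply: eq_bigr => i _.
  by apply/matrixP => a b; rewrite !mxE /= polyCM.
have MQ : char_poly_mx A *m Q = p%:M.
  rewrite mulmx_sumr (eq_bigr _ (fun (i : 'I_n) _ => step i)) sumrB telescope CA.
  rewrite Cayley_Hamilton sub0r raddfN /F drop_poly0l drop_char_poly_size.
  by rewrite expr0 map_mx1 scale1r scalemx1 opprK subrK.
apply/matrixP => i j; apply: (monic_lreg (char_poly_monic A)).
have /matrixP/(_ i j) := congr1 (mulmx (\adj (char_poly_mx A))) MQ.
by rewrite mulmxA mul_adj_mx mul_scalar_mx mul_mx_scalar !mxE.
Qed.

Lemma deriv_char_poly_mxtrace_adj : p^`() = \tr (\adj (char_poly_mx A)).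
Proof.
rewrite /char_poly deriv_det /mxtrace; apply: eq_bigr => j _; rewrite mxE.
rewrite (expand_det_row _ j) (bigD1 j) //= big1 ?addr0 => [|k nkj].
  rewrite !mxE !eqxx derivB derivMn derivX derivC subr0 mul1r.
  rewrite /cofactor; congr (_ * \det _); apply/matrixP => a b; rewrite !mxE.
  by rewrite eq_sym (negbTE (neq_lift _ _)).
rewrite !mxE eqxx derivB derivMn derivX derivC subr0 eq_sym (negbTE nkj).
by rewrite mulr0n mul0r.
Qed.

Lemma deriv_char_poly :
  p^`() = \sum_(i < n) drop_poly i.+1 p * (\tr (A ^+ i))%:P.
Proof.
rewrite deriv_char_poly_mxtrace_adj adj_char_poly_mx raddf_sum.
apply: eq_bigr => i _; rewrite /= mxtraceZ /mxtrace rmorph_sum; congr (_ * _).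
by apply: eq_bigr => k _; rewrite mxE.
Qed.

Hypothesis torsion_free : forall k (c : R), (0 < k)%N -> c *+ k = 0 -> c = 0.
Hypothesis mxtrace_exp_eq0 : forall k, (0 < k)%N -> \tr (A ^+ k) = 0.

(* Comparing coefficients in p' = n (p div X), i.e. (j + 1) p_(j+1) = n p_(j+1). *)
Lemma char_poly_traceless : p = 'X^n + (p`_0)%:P.
Proof.
have dp : p^`() = drop_poly 1 p * (n%:R)%:P.
  rewrite deriv_char_poly big_ord_recl big1 ?addr0 => [|i _].
    by rewrite expr0 mxtrace1.
  by rewrite mxtrace_exp_eq0 // mulr0.
have p_mid j : (0 < j < n)%N -> p`_j = 0.
  case: j => // j /andP[_ ltjn].
  have /polyP/(_ j) := dp; rewrite coef_deriv coefMC coef_drop_poly mulr_natr.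
  move=> coef_eq; apply: (torsion_free (_ : 0 < n - j.+1)%N); first lia.
  apply: (addrI (p`_j.+1 *+ j.+1)); rewrite addr0 -mulrnDr subnKC; last lia.
  by rewrite coef_eq addn1.
apply/polyP => j; rewrite coefD coefXn coefC.
case: j => [|j]; first by rewrite add0r.
rewrite addr0; case: (ltngtP j.+1 n) => ltjn.
- by rewrite p_mid //; lia.
- by rewrite nth_default // size_char_poly.
- by rewrite ltjn coef_char_poly_size.
Qed.

Lemma nilpotent_of_mxtrace_exp : A ^+ n = 0.
Proof.
have CH := Cayley_Hamilton A.
rewrite char_poly_traceless rmorphD /= rmorphXn /= horner_mx_X horner_mx_C in CH.
have p0 : p`_0 = 0.
  apply: (torsion_free (ltn0Sn m)); move: (congr1 mxtrace CH).
  by rewrite mxtraceD mxtrace_exp_eq0 // mxtrace_scalar add0r raddf0.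
by move: CH; rewrite p0 raddf0 addr0.
Qed.

End CharPolyTrace.

HB.instance Definition _ n := GRing.Zmodule.on (ext n).

Section ExteriorRing.
Variable n : nat.
Local Notation sT := {set idx n}.
Implicit Types (a b c : ext n) (R S T U W : sT).

Definition ncross S T : nat := #|[set p : idx n * idx n |
  (p.1 \in S) && (p.2 \in T) && (enum_rank p.2 < enum_rank p.1)%N]|.

Lemma ext_signE S T : ext_sign S T = (-1) ^+ ncross S T. Proof. by []. Qed.

Definition disjoint_union S T U : bool := (S :&: T == set0) && (S :|: T == U).

Lemma ext_mulE a b U : ext_mul a b U =
  \sum_S \sum_T (disjoint_union S T U)%:R * (ext_sign S T * a S * b T).
Proof.
rewrite ffunE; apply: eq_bigr => S _; rewrite big_mkcond; apply: eq_bigr => T _.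
by rewrite /disjoint_union; case: (_ && _); rewrite ?mul1r ?mul0r.
Qed.

Lemma sum_indicator (F : sT -> CC) X : \sum_S (S == X)%:R * F S = F X.
Proof.
by rewrite (bigD1 X) //= eqxx mul1r big1 ?addr0 // => S /negbTE ->; rewrite mul0r.
Qed.

Lemma sum_disjoint_union (F : sT -> CC) T W :
  \sum_S (disjoint_union T W S)%:R * F S = (T :&: W == set0)%:R * F (T :|: W).
Proof.
rewrite /disjoint_union; case: (T :&: W == set0) => /=.
  by rewrite mul1r -(sum_indicator F); apply: eq_bigr => S _; rewrite eq_sym.
by rewrite mul0r big1 // => S _; rewrite mul0r.
Qed.

Lemma ncrossUl R T W :
  R :&: T == set0 -> ncross (R :|: T) W = (ncross R W + ncross T W)%N.
Proof.
move=> /eqP dRT; rewrite /ncross -cardsUI.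
rewrite [in RHS](_ : _ :&: _ = set0) ?cards0 ?addn0.
  by apply: eq_card => p; rewrite !inE -!andb_orl.
apply/setP => p; rewrite !inE.
move/setP: dRT => /(_ p.1); rewrite !inE => h.
by case: (p.1 \in R) h; case: (p.1 \in T) => //= _; rewrite andbF.
Qed.

Lemma ncrossUr R T W :
  T :&: W == set0 -> ncross R (T :|: W) = (ncross R T + ncross R W)%N.
Proof.
move=> /eqP dTW; rewrite /ncross -cardsUI.
rewrite [in RHS](_ : _ :&: _ = set0) ?cards0 ?addn0.
  by apply: eq_card => p; rewrite !inE; case: (p.1 \in R); case: (p.2 \in T);
     case: (p.2 \in W); case: (enum_rank _ < _)%N.
apply/setP => p; rewrite !inE.
move/setP: dTW => /(_ p.2); rewrite !inE => h.
by case: (p.2 \in T) h; case: (p.2 \in W) => //= _; rewrite !andbF.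
Qed.

Lemma ncross0l T : ncross set0 T = 0%N.
Proof. by apply/eqP; rewrite cards_eq0; apply/eqP/setP => p; rewrite !inE. Qed.

Lemma ncross0r T : ncross T set0 = 0%N.
Proof. by apply/eqP; rewrite cards_eq0; apply/eqP/setP => p; rewrite !inE andbF. Qed.

Lemma mulr_sum2 (x : CC) (F : sT -> sT -> CC) :
  x * \sum_i \sum_j F i j = \sum_i \sum_j x * F i j.
Proof. by rewrite mulr_sumr; apply: eq_bigr => i _; rewrite mulr_sumr. Qed.

Lemma mulr_suml2 (x : CC) (F : sT -> sT -> CC) :
  (\sum_i \sum_j F i j) * x = \sum_i \sum_j F i j * x.
Proof. by rewrite mulr_suml; apply: eq_bigr => i _; rewrite mulr_suml. Qed.

Lemma ext_mul_mulE a b c U : ext_mul a (ext_mul b c) U =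
  \sum_R \sum_T \sum_W ((T :&: W == set0) && disjoint_union R (T :|: W) U)%:R *
     (ext_sign R (T :|: W) * ext_sign T W * a R * b T * c W).
Proof.
rewrite ext_mulE; apply: eq_bigr => R _.
under eq_bigr => S _ do rewrite ext_mulE mulrA mulr_sum2.
rewrite exchange_big; apply: eq_bigr => T _; rewrite exchange_big.
apply: eq_bigr => W _.
under eq_bigr => S _ do [rewrite (_ : _ * _ = (disjoint_union T W S)%:R *
   ((disjoint_union R S U)%:R *
   (ext_sign R S * ext_sign T W * a R * b T * c W))); last by ring].
by rewrite sum_disjoint_union; case: (T :&: W == set0); rewrite /= ?mul1r ?mul0r.
Qed.

Lemma ext_mulr_mulE a b c U : ext_mul (ext_mul a b) c U =
  \sum_R \sum_T \sum_W ((R :&: T == set0) && disjoint_union (R :|: T) W U)%:R *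
     (ext_sign (R :|: T) W * ext_sign R T * a R * b T * c W).
Proof.
rewrite ext_mulE.
under eq_bigr => S _ do under eq_bigr => W _ do
  rewrite ext_mulE mulr_sum2 mulr_suml2 mulr_sum2.
under eq_bigr => S _ do
  [rewrite exchange_big; under eq_bigr => i _ do rewrite exchange_big].
rewrite exchange_big; apply: eq_bigr => R _; rewrite exchange_big.
apply: eq_bigr => T _; rewrite exchange_big; apply: eq_bigr => W _.
under eq_bigr => S _ do [rewrite (_ : _ * _ = (disjoint_union R T S)%:R *
   ((disjoint_union S W U)%:R *
   (ext_sign S W * ext_sign R T * a R * b T * c W))); last by ring].
by rewrite sum_disjoint_union; case: (R :&: T == set0); rewrite /= ?mul1r ?mul0r.
Qed.

Lemma ext_mulA : associative (@ext_mul n).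
Proof.
move=> a b c; apply/ffunP => U; rewrite ext_mul_mulE ext_mulr_mulE.
apply: eq_bigr => R _; apply: eq_bigr => T _; apply: eq_bigr => W _.
have -> : ((T :&: W == set0) && disjoint_union R (T :|: W) U) =
          ((R :&: T == set0) && disjoint_union (R :|: T) W U).
  rewrite /disjoint_union setIUr setIUl !setU_eq0 setUA.
  by case: (R :&: T == set0); case: (R :&: W == set0); case: (T :&: W == set0).
case du: (_ && _); last by rewrite !mul0r.
move: du; rewrite /disjoint_union setIUl setU_eq0.
case/andP=> dRT /andP[/andP[dRW dTW] _].
by rewrite !ext_signE ncrossUl // ncrossUr // !exprD; congr (_ * _); ring.
Qed.

Lemma ext_mul1l : left_id (ext_one n) (@ext_mul n).
Proof.
move=> a; apply/ffunP => U; rewrite ext_mulE (bigD1 set0) //= [X in _ + X]big1.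
  under eq_bigr => T _ do rewrite /disjoint_union set0I set0U eqxx /=
    ext_signE ncross0l ffunE eqxx /= !mul1r.
  by rewrite sum_indicator addr0.
move=> S /negbTE nS; rewrite big1 // => T _; rewrite ffunE nS /=.
by rewrite mulr0 mul0r mulr0.
Qed.

Lemma ext_mul1r : right_id (ext_one n) (@ext_mul n).
Proof.
move=> a; apply/ffunP => U.
rewrite ext_mulE exchange_big (bigD1 set0) //= [X in _ + X]big1.
  under eq_bigr => T _ do rewrite /disjoint_union setI0 setU0 eqxx /=
    ext_signE ncross0r ffunE eqxx /= mulr1 mul1r.
  by rewrite sum_indicator addr0.
by move=> S /negbTE nS; rewrite big1 // => T _; rewrite ffunE nS /= !mulr0.
Qed.

Lemma ext_mulDl : left_distributive (@ext_mul n) +%R.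
Proof.
move=> a b c; apply/ffunP => U; rewrite [RHS]ffunE !ext_mulE -big_split.
apply: eq_bigr => S _; rewrite -big_split; apply: eq_bigr => T _.
by rewrite ffunE /=; ring.
Qed.

Lemma ext_mulDr : right_distributive (@ext_mul n) +%R.
Proof.
move=> a b c; apply/ffunP => U; rewrite [RHS]ffunE !ext_mulE -big_split.
apply: eq_bigr => S _; rewrite -big_split; apply: eq_bigr => T _.
by rewrite ffunE /=; ring.
Qed.

Lemma ext_one_neq0 : ext_one n != 0.
Proof. by apply/eqP => /ffunP/(_ set0); rewrite !ffunE eqxx; apply/eqP/oner_neq0. Qed.

End ExteriorRing.

HB.instance Definition _ n := GRing.Zmodule_isNzRing.Build (ext n)
  (@ext_mulA n) (@ext_mul1l n) (@ext_mul1r n) (@ext_mulDl n) (@ext_mulDr n)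
  (@ext_one_neq0 n).

Section Parity.
Variable n : nat.
Implicit Types (a b : ext n) (S T U : {set idx n}).

Definition ext_homog (p : bool) : {pred ext n} :=
  fun a => [forall S : {set idx n}, (odd #|S| != p) ==> (a S == 0)].

Lemma ext_homogP p a :
  reflect (forall S, odd #|S| != p -> a S = 0) (a \in ext_homog p).
Proof.
apply: (iffP forallP) => [h S pS | h S]; first exact/eqP/(implyP (h S)).
by apply/implyP => /h ->.
Qed.

Lemma ext_homog0 p : 0 \in ext_homog p.
Proof. by apply/ext_homogP => S _; rewrite ffunE. Qed.

Lemma ext_homogD p a b : a \in ext_homog p -> b \in ext_homog p ->
  a + b \in ext_homog p.
Proof.
move=> /ext_homogP ha /ext_homogP hb; apply/ext_homogP => S pS.
by rewrite ffunE ha // hb // addr0.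
Qed.

Lemma ext_homogN p a : a \in ext_homog p -> - a \in ext_homog p.
Proof.
by move=> /ext_homogP ha; apply/ext_homogP => S pS; rewrite ffunE ha // oppr0.
Qed.

Lemma ext_homog_sum p (I : finType) (F : I -> ext n) :
  (forall i, F i \in ext_homog p) -> \sum_i F i \in ext_homog p.
Proof. by move=> hF; elim/big_ind: _ => //; [exact: ext_homog0|exact: ext_homogD]. Qed.

Lemma ext_homog1 : 1 \in ext_homog false.
Proof.
by apply/ext_homogP => S; rewrite ffunE; have [->|] := eqVneq S set0; rewrite ?cards0.
Qed.

Lemma ext_gen_odd i j : ext_gen i j \in ext_homog true.
Proof.
by apply/ext_homogP => S; rewrite ffunE; have [->|] := eqVneq S [set (i, j)];
  rewrite ?cards1.
Qed.

Lemma ncross_sym S T :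
  S :&: T == set0 -> (ncross S T + ncross T S)%N = (#|S| * #|T|)%N.
Proof.
move=> /eqP dST; pose sw (p : idx n * idx n) := (p.2, p.1).
have sw_inj : injective sw by move=> [x y] [x' y'] [-> ->].
have -> : ncross T S = #|[set p : idx n * idx n | (p.1 \in S) && (p.2 \in T) &&
               (enum_rank p.1 < enum_rank p.2)%N]|.
  rewrite /ncross -(card_preimset _ sw_inj); apply: eq_card => p; rewrite !inE /=.
  by case: (p.1 \in S); case: (p.2 \in T).
rewrite -cardsUI [X in (_ + X)%N](_ : _ = 0%N) ?addn0.
  rewrite -cardsX; apply: eq_card => p; rewrite !inE.
  case: (boolP (p.1 \in S)) => h1; case: (boolP (p.2 \in T)) => h2 //=.
  case: ltngtP => // /val_inj/enum_rank_inj e.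
  by move/setP: dST => /(_ p.1); rewrite !inE h1 /= -e h2.
apply/eqP; rewrite cards_eq0; apply/eqP/setP => p; rewrite !inE.
by case: (p.1 \in S); case: (p.2 \in T) => //=; case: ltngtP.
Qed.

Lemma ext_sign_sym S T : S :&: T == set0 ->
  ext_sign S T * ext_sign T S = (-1) ^+ (odd #|S| && odd #|T|).
Proof. by move=> dST; rewrite !ext_signE -exprD ncross_sym // -oddM signr_odd. Qed.

Lemma disjoint_union_card S T U :
  disjoint_union S T U -> #|U| = (#|S| + #|T|)%N.
Proof. by case/andP => /eqP dST /eqP <-; rewrite cardsU dST cards0 subn0. Qed.

Lemma ext_homogM p q a b : a \in ext_homog p -> b \in ext_homog q ->
  a * b \in ext_homog (p (+) q).
Proof.
move=> /ext_homogP ha /ext_homogP hb; apply/ext_homogP => U pqU.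
rewrite ext_mulE big1 // => S _; rewrite big1 // => T _.
case du: (disjoint_union S T U); last by rewrite mul0r.
have [pS|] := eqVneq (odd #|S|) p; last by move/ha ->; rewrite mulr0 mul0r mulr0.
have [qT|] := eqVneq (odd #|T|) q; last by move/hb ->; rewrite !mulr0.
by move: pqU; rewrite (disjoint_union_card du) oddD pS qT eqxx.
Qed.

(* Both sides are expanded over the same pairs (S, T); swapping the two
   factors of e_S /\ e_T costs ext_sign S T * ext_sign T S. *)
Lemma ext_homogC p q a b : a \in ext_homog p -> b \in ext_homog q ->
  b * a = (-1) ^+ (p && q) * (a * b).
Proof.
move=> /ext_homogP ha /ext_homogP hb; apply/ffunP => U.
have -> : ((-1) ^+ (p && q) * (a * b) : ext n) U = (-1) ^+ (p && q) * (a * b) U.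
  by case: (p && q); rewrite ?expr0 ?expr1 ?mulN1r ?mul1r // ffunE.
rewrite !ext_mulE exchange_big mulr_sumr; apply: eq_bigr => S _.
rewrite mulr_sumr; apply: eq_bigr => T _.
rewrite [disjoint_union T S U](_ : _ = disjoint_union S T U); last first.
  by rewrite /disjoint_union setIC setUC.
case du: (disjoint_union S T U); last by rewrite !mul0r mulr0.
have [pS|] := eqVneq (odd #|S|) p; last by move/ha ->; rewrite !(mulr0, mul0r).
have [qT|] := eqVneq (odd #|T|) q; last by move/hb ->; rewrite !(mulr0, mul0r).
have <- : ext_sign S T * ext_sign T S = (-1) ^+ (p && q).
  by rewrite ext_sign_sym -?pS -?qT //; case/andP: du.
have sign_sq : ext_sign S T * ext_sign S T = 1.
  by rewrite ext_signE -exprD addnn -mul2n exprM sqrrN !expr1n.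
transitivity (ext_sign S T * ext_sign S T * (ext_sign T S * b T * a S)).
  by rewrite sign_sq mul1r.
by rewrite mul1r; ring.
Qed.

End Parity.

Arguments ext_homog {n}.

Fact ext_even_subring_closed n : subring_closed (@ext_homog n false).
Proof.
split; first exact: ext_homog1.
  by move=> a b ha hb; rewrite ext_homogD ?ext_homogN.
exact: ext_homogM.
Qed.

HB.instance Definition _ n := GRing.isSubringClosed.Build (ext n)
  (ext_homog false) (ext_even_subring_closed n).

Record ext_even n := ExtEven {
  ext_even_val :> ext n;
  ext_even_valP : ext_even_val \in ext_homog false }.

HB.instance Definition _ n := [isSub for @ext_even_val n].
HB.instance Definition _ n := [Choice of ext_even n by <:].
HB.instance Definition _ n := [SubChoice_isSubNzRing of ext_even n by <:].

Lemma ext_even_mulC n : commutative (@GRing.mul (ext_even n)).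
Proof.
move=> a b; apply: val_inj => /=.
by rewrite (ext_homogC (ext_even_valP a) (ext_even_valP b)) expr0 mul1r.
Qed.

HB.instance Definition _ n :=
  GRing.PzSemiRing_hasCommutativeMul.Build (ext_even n) (@ext_even_mulC n).

Lemma ext_natmul_eq0 n (a : ext n) k : (0 < k)%N -> a *+ k = 0 -> a = 0.
Proof.
move=> k_gt0 /ffunP ak0; apply/ffunP => S; move: (ak0 S).
rewrite ffunMnE !ffunE => /eqP; rewrite mulrn_eq0 eqn0Ngt k_gt0.
by move/eqP.
Qed.

Lemma mxtrace_mul_odd n m (A B : 'M[ext n]_m) :
    (forall i j, A i j \in ext_homog true) -> (forall i j, B i j \in ext_homog true) ->
  \tr (A *m B) = - \tr (B *m A).
Proof.
move=> A_odd B_odd.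
have -> : \tr (A *m B) = \sum_i \sum_l A i l * B l i.
  by apply: eq_bigr => i _; rewrite mxE.
have -> : \tr (B *m A) = \sum_l \sum_i B l i * A i l.
  by apply: eq_bigr => l _; rewrite mxE.
rewrite [in RHS]exchange_big -sumrN; apply: eq_bigr => i _; rewrite -sumrN.
apply: eq_bigr => l _.
by rewrite (ext_homogC (B_odd l i) (A_odd i l)) expr1 mulN1r.
Qed.

Section OddMatrix.
Variables (n m : nat) (A : 'M[ext n]_m.+1).
Hypothesis A_odd : forall i j, A i j \in ext_homog true.

Lemma odd_mx_exp_homog k i j : (A ^+ k) i j \in ext_homog (odd k).
Proof.
elim: k i j => [|k IHk] i j.
  by rewrite expr0 mxE; case: eqP => _; [exact: ext_homog1 | exact: ext_homog0].
have -> : odd k.+1 = true (+) odd k by [].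
by rewrite exprS mxE; apply: ext_homog_sum => l; exact: ext_homogM.
Qed.

Lemma mxtrace_odd_mx_exp_even k : (0 < k)%N -> \tr (A ^+ (2 * k)) = 0.
Proof.
case: k => // k _; set B := A ^+ (2 * k).+1.
have B_odd i j : B i j \in ext_homog true.
  by have := odd_mx_exp_homog (2 * k).+1 i j; rewrite /= oddM.
have -> : (2 * k.+1 = (2 * k).+2)%N by rewrite mulnS.
apply: (@ext_natmul_eq0 _ _ 2) => //; rewrite mulr2n.
have AB : A ^+ (2 * k).+2 = A *m B by rewrite exprS.
have BA : A ^+ (2 * k).+2 = B *m A by rewrite exprSr.
by rewrite {1}AB BA mxtrace_mul_odd // addNr.
Qed.

Definition odd_mx_sq : 'M[ext_even n]_m.+1 :=
  \matrix_(i, j) ExtEven (odd_mx_exp_homog 2 i j).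

Lemma map_odd_mx_sq_exp k : map_mx val (odd_mx_sq ^+ k) = A ^+ (2 * k).
Proof.
by rewrite rmorphXn exprM; congr (_ ^+ _); apply/matrixP => i j; rewrite !mxE.
Qed.

Lemma odd_mx_nilpotent : A ^+ (2 * m.+1) = 0.
Proof.
rewrite -map_odd_mx_sq_exp nilpotent_of_mxtrace_exp => [|k c k_gt0|k k_gt0].
- by apply/matrixP => i j; rewrite !mxE.
- move/(congr1 val); rewrite raddfMn /= => /(ext_natmul_eq0 k_gt0) c0.
  exact: val_inj.
- have val_tr (B : 'M[ext_even n]_m.+1) : val (\tr B) = \tr (map_mx val B).
    by rewrite /mxtrace raddf_sum; apply: eq_bigr => i _; rewrite mxE.
  by apply: val_inj; rewrite val_tr map_odd_mx_sq_exp mxtrace_odd_mx_exp_even.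
Qed.

End OddMatrix.

Lemma ext_mxpowE n m (A : 'M[ext n]_m.+1) k : ext_mxpow A k = A ^+ k.
Proof.
have mulE (B C : 'M[ext n]_m.+1) : ext_mxmul B C = B * C.
  by apply/matrixP => i j; rewrite !mxE.
elim: k => [|k IHk]; last by rewrite /ext_mxpow iterS -/(ext_mxpow A k) IHk mulE exprS.
by apply/matrixP => i j; rewrite !mxE; case: eqP.
Qed.

Theorem corollary2p5 (n : nat) : ext_mxpow (Xgen n) (2 * n) = 0.
Proof.
case: n => [|m]; first by apply/matrixP => -[].
rewrite ext_mxpowE odd_mx_nilpotent // => i j.
by rewrite mxE ext_gen_odd.
Qed.
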